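(* (i) Every semi-magic Sudoku board can be transformed by an element of $H_\Gamma$ into a semi-magic Sudoku board whose gnomon is the standard gnomon. (ii) There are exactly sixteen $H_\Gamma$-nests of semi-magic Sudoku boards, and each $H_\Gamma$-nest contains exactly one semi-magic Sudoku board whose gnomon is the standard gnomon.
   Context: A Sudoku board is a $9\times 9$ array with entries from $\{0,\dots,8\}$, rows indexed $1,\dots,9$ top to bottom and columns $1,\dots,9$ left to right, such that every row, every column, and every $3\times3$ block (rows $3a+1,\dots,3a+3$, columns $3b+1,\dots,3b+3$) contains each symbol exactly once. A semi-magic Sudoku board is a Sudoku board in which, in every block, each of the three rows and each of the three columns of the block has entry sum $12$. Bands are the three horizontal strips of blocks (rows 1–3, 4–6, 7–9); pillars are the three vertical strips (columns 1–3, 4–6, 7–9). The gnomon of a board is the union of its first band and its first pillar (rows 1–3 together with columns 1–3). The standard gnomon is the one with rows $1,2,3$ equal to $(0,4,8,7,2,3,5,6,1)$, $(5,6,1,0,4,8,7,2,3)$, $(7,2,3,5,6,1,0,4,8)$ and with the entries in columns $1,2,3$ of rows $4,\dots,9$ equal to $(8,0,4)$, $(1,5,6)$, $(3,7,2)$, $(4,8,0)$, $(6,1,5)$, $(2,3,7)$ respectively. $H_\Gamma$ is the group of cell rearrangements (acting on boards by moving entries) generated by the transpose, all swaps of two rows within the same band, all swaps of two columns within the same pillar, the swap of pillars 2 and 3, and the swap of bands 2 and 3. Two semi-magic boards are in the same $H_\Gamma$-nest if one can be obtained from the other by an element of $H_\Gamma$. *)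

From mathcomp Require Import all_boot all_order all_fingroup.
Set Implicit Arguments. Unset Strict Implicit. Unset Printing Implicit Defensive.



(* Cells: (row, column), both indexed 0..8 (paper's 1..9 shifted by one).
   Entries: symbols 0..8. *)
Definition cell := ('I_9 * 'I_9)%type.
Definition board := {ffun cell -> 'I_9}.

Definition bcell (a b i j : 'I_3) : cell := (inord (3 * a + i), inord (3 * b + j)).

Definition sudoku (B : board) : bool :=
  [&& [forall r : 'I_9, forall s : 'I_9, #|[set c : 'I_9 | B (r, c) == s]| == 1],
      [forall c : 'I_9, forall s : 'I_9, #|[set r : 'I_9 | B (r, c) == s]| == 1] &
      [forall a : 'I_3, forall b : 'I_3, forall s : 'I_9,
         #|[set p : 'I_3 * 'I_3 | B (bcell a b p.1 p.2) == s]| == 1]].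

Definition semimagic (B : board) : bool :=
  [&& sudoku B,
      [forall a : 'I_3, forall b : 'I_3, forall i : 'I_3,
         \sum_(j < 3) nat_of_ord (B (bcell a b i j)) == 12] &
      [forall a : 'I_3, forall b : 'I_3, forall j : 'I_3,
         \sum_(i < 3) nat_of_ord (B (bcell a b i j)) == 12]].

Definition std_rows : seq (seq nat) :=
  [:: [:: 0; 4; 8; 7; 2; 3; 5; 6; 1];
      [:: 5; 6; 1; 0; 4; 8; 7; 2; 3];
      [:: 7; 2; 3; 5; 6; 1; 0; 4; 8];
      [:: 8; 0; 4]; [:: 1; 5; 6]; [:: 3; 7; 2];
      [:: 4; 8; 0]; [:: 6; 1; 5]; [:: 2; 3; 7]].

Definition std_entry (r c : nat) : nat := nth 0 (nth [::] std_rows r) c.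

Definition std_gnomon (B : board) : bool :=
  [forall r : 'I_9, forall c : 'I_9,
     ((r < 3) || (c < 3)) ==> (nat_of_ord (B (r, c)) == std_entry r c)].

Definition transp_fun (x : cell) : cell := (x.2, x.1).
Lemma transp_inj : injective transp_fun.
Proof. by move=> [a b] [c d] /= [-> ->]. Qed.
Definition transp : {perm cell} := perm transp_inj.

Definition rowf (s : {perm 'I_9}) (x : cell) : cell := (s x.1, x.2).
Lemma rowf_inj s : injective (rowf s).
Proof. by move=> [a b] [c d] [/perm_inj -> ->]. Qed.
Definition rowact s : {perm cell} := perm (@rowf_inj s).

Definition colf (s : {perm 'I_9}) (x : cell) : cell := (x.1, s x.2).
Lemma colf_inj s : injective (colf s).
Proof. by move=> [a b] [c d] [-> /perm_inj ->]. Qed.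
Definition colact s : {perm cell} := perm (@colf_inj s).

Definition swap23 : {perm 'I_9} :=
  (tperm (inord 3) (inord 6) * tperm (inord 4) (inord 7) * tperm (inord 5) (inord 8))%g.

Definition HGamma_gens : {set {perm cell}} :=
  [set transp]
  :|: [set rowact (tperm p.1 p.2) | p : cell & p.1 %/ 3 == p.2 %/ 3]
  :|: [set colact (tperm p.1 p.2) | p : cell & p.1 %/ 3 == p.2 %/ 3]
  :|: [set colact swap23; rowact swap23].

Definition HGamma : {group {perm cell}} := <<HGamma_gens>>%G.

(* action on boards: the entry in cell x is moved to cell g x *)
Definition bact (g : {perm cell}) (B : board) : board := [ffun x => B ((g^-1)%g x)].

Definition nest (B : board) : {set board} := [set bact g B | g in HGamma].

Definition semimagic_boards : {set board} := [set B | semimagic B].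

From mathcomp Require Import all_boot all_fingroup zify.
Set Implicit Arguments. Unset Strict Implicit. Unset Printing Implicit Defensive.

(* A board is handled through its 3x3 matrix of blocks.  Every block of a
   semi-magic board is one of the 72 semi-magic 3x3 squares with entries
   0..8, and the Sudoku conditions say that blocks in a common band have
   disjoint rows and blocks in a common pillar have disjoint columns.  The
   generators of H_Gamma act on this matrix by transposing it, by swapping
   rows or columns inside all the blocks of a band or pillar, and by
   swapping bands or pillars.  This lets a finite search bring the corner
   block, then the rest of the first band, then the rest of the first
   pillar to the standard gnomon; the last two steps do not interfere, so
   each search ranges over pairs of blocks only.  Completing the standard
   gnomon by four compatible blocks gives exactly 16 boards.  Finally every
   element of H_Gamma acts on cells by row and column maps preserving the
   first band, possibly after transposition; since the first block, the
   first row and the first column of the standard gnomon have distinct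
   entries, such a map fixing a standard gnomon is the identity, so each
   nest contains a single standard board. *)

Definition all_below (n : nat) (P : pred nat) : bool := all P (iota 0 n).

Lemma all_belowP n (P : pred nat) : reflect (forall k, k < n -> P k) (all_below n P).
Proof.
apply: (iffP allP) => H k; last by rewrite mem_iota add0n => /andP [_ /H].
by move=> Hk; apply: H; rewrite mem_iota add0n.
Qed.

(** * Semi-magic 3x3 squares *)

(* Squares are row-major lists of length 9. *)
Definition sq_entry (s : seq nat) (i j : nat) : nat := nth 0 s (3 * i + j).

Definition square_of (T : Type) (f : nat -> nat -> T) : seq T :=
  [seq f (n %/ 3) (n %% 3) | n <- iota 0 9].

Lemma square_ofE (T : Type) (f : nat -> nat -> T) :
  square_of f = [:: f 0 0; f 0 1; f 0 2; f 1 0; f 1 1; f 1 2; f 2 0; f 2 1; f 2 2].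
Proof. by []. Qed.

Lemma size_square_of (T : Type) (f : nat -> nat -> T) : size (square_of f) = 9.
Proof. by rewrite size_map size_iota. Qed.

Lemma nth_square_of (T : Type) (x0 : T) f i j : i < 3 -> j < 3 ->
  nth x0 (square_of f) (3 * i + j) = f i j.
Proof.
move=> Hi Hj; rewrite (nth_map 0) ?size_iota ?nth_iota; try lia.
by congr f; lia.
Qed.

Lemma sq_entry_square_of f i j : i < 3 -> j < 3 -> sq_entry (square_of f) i j = f i j.
Proof. exact: nth_square_of. Qed.

Lemma eq_square_of (T : Type) (f g : nat -> nat -> T) :
  (forall i j, i < 3 -> j < 3 -> f i j = g i j) -> square_of f = square_of g.
Proof.
by move=> E; apply/eq_in_map => n; rewrite mem_iota add0n => /andP [_ Hn]; apply: E; lia.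
Qed.

Lemma square_of_nth (T : Type) (x0 : T) s :
  size s = 9 -> square_of (fun i j => nth x0 s (3 * i + j)) = s.
Proof.
move=> Hs; apply: (eq_from_nth (x0 := x0)); rewrite size_square_of ?Hs // => n Hn.
by rewrite (nth_map 0) ?size_iota ?nth_iota //; congr nth; lia.
Qed.

Lemma uniq_square_of (f : nat -> nat -> nat) :
  (forall i j i' j', i < 3 -> j < 3 -> i' < 3 -> j' < 3 -> f i j = f i' j' -> i = i' /\ j = j') ->
  uniq (square_of f).
Proof.
move=> injf; rewrite map_inj_in_uniq ?iota_uniq // => m n.
by rewrite !mem_iota !add0n => Hm Hn /injf []; lia.
Qed.

Definition line_sums12 (s : seq nat) : bool :=
  all_below 3 (fun i => (sq_entry s i 0 + sq_entry s i 1 + sq_entry s i 2 == 12)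
                && (sq_entry s 0 i + sq_entry s 1 i + sq_entry s 2 i == 12)).

Definition magic_sq (s : seq nat) : bool :=
  [&& size s == 9, uniq s, all (fun x => x < 9) s & line_sums12 s].

(* A square with line sums 12 is determined by its top-left 2x2 minor. *)
Definition complete_minor (x00 x01 x10 x11 : nat) : seq nat :=
  let x02 := 12 - (x00 + x01) in let x12 := 12 - (x10 + x11) in
  let x20 := 12 - (x00 + x10) in let x21 := 12 - (x01 + x11) in
  [:: x00; x01; x02; x10; x11; x12; x20; x21; 12 - (x02 + x12)].

Definition digit_pairs : seq (nat * nat) := [seq (x, y) | x <- iota 0 9, y <- iota 0 9].

(* Computed once; [magic_squaresE] records the definition. *)
Definition magic_squares : seq (seq nat) := Eval vm_compute in
  [seq s <- [seq complete_minor p.1 p.2 q.1 q.2 | p <- digit_pairs, q <- digit_pairs]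
   | magic_sq s].

Lemma magic_squaresE : magic_squares =
  [seq s <- [seq complete_minor p.1 p.2 q.1 q.2 | p <- digit_pairs, q <- digit_pairs]
   | magic_sq s].
Proof. by vm_compute. Qed.

Lemma complete_minorE s : magic_sq s ->
  s = complete_minor (sq_entry s 0 0) (sq_entry s 0 1) (sq_entry s 1 0) (sq_entry s 1 1).
Proof.
case/and4P=> /eqP; case: s => [|x0 [|x1 [|x2 [|x3 [|x4 [|x5 [|x6 [|x7 [|x8 [|]]]]]]]]]] //= _ _ _.
rewrite /line_sums12 /all_below /sq_entry /=.
case/and4P=> /andP [/eqP r0 /eqP c0] /andP [/eqP r1 /eqP c1] /andP [/eqP r2 /eqP c2] _.
rewrite /complete_minor; congr [:: _; _; _; _; _; _; _; _; _]; lia.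
Qed.

Lemma mem_magic_squares s : (s \in magic_squares) = magic_sq s.
Proof.
rewrite magic_squaresE mem_filter andb_idr // => Hs.
have digit i j : i < 3 -> j < 3 -> sq_entry s i j \in iota 0 9.
  move=> Hi Hj; case/and4P: Hs => /eqP Hsz _ /allP Hlt _.
  by rewrite mem_iota add0n leq0n Hlt // mem_nth // Hsz; lia.
rewrite {1}(complete_minorE Hs).
apply/allpairsP; exists ((sq_entry s 0 0, sq_entry s 0 1), (sq_entry s 1 0, sq_entry s 1 1)).
by split=> //; apply: allpairs_f; apply: digit.
Qed.

Section MagicSquare.
Variable s : seq nat.
Hypothesis magic_s : s \in magic_squares.

Let magic_s' : magic_sq s. Proof. by rewrite -mem_magic_squares. Qed.

Lemma size_magic : size s = 9.
Proof. by case/and4P: magic_s' => /eqP. Qed.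

Lemma magic_row_sum i : i < 3 -> sq_entry s i 0 + sq_entry s i 1 + sq_entry s i 2 = 12.
Proof. by case/and4P: magic_s' => _ _ _ /all_belowP H /H /andP [/eqP]. Qed.

Lemma magic_col_sum j : j < 3 -> sq_entry s 0 j + sq_entry s 1 j + sq_entry s 2 j = 12.
Proof. by case/and4P: magic_s' => _ _ _ /all_belowP H /H /andP [_ /eqP]. Qed.

Lemma magic_entry_lt9 i j : sq_entry s i j < 9.
Proof.
case: (ltnP (3 * i + j) 9) => [Hn|Hn]; last by rewrite /sq_entry nth_default // size_magic.
by case/and4P: magic_s' => _ _ /allP H _; apply: H; rewrite mem_nth // size_magic.
Qed.

Lemma magic_entry_inj i j i' j' : i < 3 -> j < 3 -> i' < 3 -> j' < 3 ->
  sq_entry s i j = sq_entry s i' j' -> i = i' /\ j = j'.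
Proof.
move=> Hi Hj Hi' Hj' /eqP; case/and4P: magic_s' => _ Hu _ _.
by rewrite /sq_entry nth_uniq ?size_magic // => [/eqP E||]; try split; lia.
Qed.
End MagicSquare.

Definition adj_swap (b : bool) (i : nat) : nat :=
  if b then (if i == 1 then 2 else if i == 2 then 1 else i)
  else (if i == 0 then 1 else if i == 1 then 0 else i).

Arguments adj_swap : simpl never.

Lemma adj_swap_lt b i : i < 3 -> adj_swap b i < 3.
Proof. by case: b; case: i => [|[|[|]]]. Qed.

Lemma adj_swapK b i : adj_swap b (adj_swap b i) = i.
Proof. by case: b; case: i => [|[|[|i]]]. Qed.

Definition sq_transpose (t : seq nat) : seq nat := square_of (fun i j => sq_entry t j i).
Definition sq_swap_rows (b : bool) (t : seq nat) : seq nat :=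
  square_of (fun i j => sq_entry t (adj_swap b i) j).
Definition sq_swap_cols (b : bool) (t : seq nat) : seq nat :=
  square_of (fun i j => sq_entry t i (adj_swap b j)).

Lemma magic_squares_closed : all (fun t =>
  [&& sq_transpose t \in magic_squares,
      all (fun b => sq_swap_rows b t \in magic_squares) [:: false; true] &
      all (fun b => sq_swap_cols b t \in magic_squares) [:: false; true]]) magic_squares.
Proof. by vm_compute. Qed.

Section SquareSymmetries.
Variable t : seq nat.
Hypothesis magic_t : t \in magic_squares.
Let closed := allP magic_squares_closed t magic_t.

Lemma magic_transpose : sq_transpose t \in magic_squares.
Proof. by case/and3P: closed. Qed.

Lemma magic_swap_rows b : sq_swap_rows b t \in magic_squares.
Proof. by case/and3P: closed => _ /allP H _; apply: H; case: b. Qed.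

Lemma magic_swap_cols b : sq_swap_cols b t \in magic_squares.
Proof. by case/and3P: closed => _ _ /allP H; apply: H; case: b. Qed.
End SquareSymmetries.

(** * Block matrices *)

Definition rows_disjoint (t u : seq nat) : bool :=
  all_below 3 (fun i => all_below 3 (fun j => all_below 3 (fun j' =>
    sq_entry t i j != sq_entry u i j'))).
Definition cols_disjoint (t u : seq nat) : bool :=
  all_below 3 (fun j => all_below 3 (fun i => all_below 3 (fun i' =>
    sq_entry t i j != sq_entry u i' j))).

Lemma rows_disjointP t u : reflect
  (forall i j j', i < 3 -> j < 3 -> j' < 3 -> sq_entry t i j != sq_entry u i j')
  (rows_disjoint t u).
Proof.
apply: (iffP (all_belowP _ _)) => H i => [j j' Hi Hj Hj'|Hi].
  by move/all_belowP: (H i Hi) => /(_ j Hj) /all_belowP; apply.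
by apply/all_belowP => j Hj; apply/all_belowP => j' Hj'; apply: H.
Qed.

Lemma cols_disjointP t u : reflect
  (forall i i' j, i < 3 -> i' < 3 -> j < 3 -> sq_entry t i j != sq_entry u i' j)
  (cols_disjoint t u).
Proof.
apply: (iffP (all_belowP _ _)) => H => [i i' j Hi Hi' Hj|j Hj].
  by move/all_belowP: (H j Hj) => /(_ i Hi) /all_belowP; apply.
by apply/all_belowP => i Hi; apply/all_belowP => i' Hi'; apply: H.
Qed.

Lemma rows_disjointC t u : rows_disjoint t u = rows_disjoint u t.
Proof.
by apply/rows_disjointP/rows_disjointP => H i j j' Hi Hj Hj'; rewrite eq_sym; apply: H.
Qed.

Lemma cols_disjointC t u : cols_disjoint t u = cols_disjoint u t.
Proof.
by apply/cols_disjointP/cols_disjointP => H i i' j Hi Hi' Hj; rewrite eq_sym; apply: H.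
Qed.

Lemma rows_disjoint_transpose t u :
  cols_disjoint t u -> rows_disjoint (sq_transpose t) (sq_transpose u).
Proof.
move/cols_disjointP => H; apply/rows_disjointP => i j j' Hi Hj Hj'.
by rewrite !sq_entry_square_of //; apply: H.
Qed.

Lemma cols_disjoint_transpose t u :
  rows_disjoint t u -> cols_disjoint (sq_transpose t) (sq_transpose u).
Proof.
move/rows_disjointP => H; apply/cols_disjointP => i i' j Hi Hi' Hj.
by rewrite !sq_entry_square_of //; apply: H.
Qed.

Lemma rows_disjoint_swap_rows b t u :
  rows_disjoint t u -> rows_disjoint (sq_swap_rows b t) (sq_swap_rows b u).
Proof.
move/rows_disjointP => H; apply/rows_disjointP => i j j' Hi Hj Hj'.
by rewrite !sq_entry_square_of //; apply: H => //; apply: adj_swap_lt.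
Qed.

Lemma cols_disjoint_swap_rows b t u :
  cols_disjoint t u -> cols_disjoint (sq_swap_rows b t) u.
Proof.
move/cols_disjointP => H; apply/cols_disjointP => i i' j Hi Hi' Hj.
by rewrite !sq_entry_square_of //; apply: H => //; apply: adj_swap_lt.
Qed.

Lemma cols_disjoint_swap_cols b t u :
  cols_disjoint t u -> cols_disjoint (sq_swap_cols b t) (sq_swap_cols b u).
Proof.
move/cols_disjointP => H; apply/cols_disjointP => i i' j Hi Hi' Hj.
by rewrite !sq_entry_square_of //; apply: H => //; apply: adj_swap_lt.
Qed.

Lemma rows_disjoint_swap_cols b t u :
  rows_disjoint t u -> rows_disjoint (sq_swap_cols b t) u.
Proof.
move/rows_disjointP => H; apply/rows_disjointP => i j j' Hi Hj Hj'.
by rewrite !sq_entry_square_of //; apply: H => //; apply: adj_swap_lt.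
Qed.

Definition latin (K : nat -> nat -> seq nat) : bool :=
  all_below 3 (fun a => all_below 3 (fun b => all_below 3 (fun b' =>
    (b != b') ==> rows_disjoint (K a b) (K a b'))))
  && all_below 3 (fun a => all_below 3 (fun a' => all_below 3 (fun b =>
    (a != a') ==> cols_disjoint (K a b) (K a' b)))).

Lemma latinP K : reflect
  ((forall a b b', a < 3 -> b < 3 -> b' < 3 -> b != b' -> rows_disjoint (K a b) (K a b')) /\
   (forall a a' b, a < 3 -> a' < 3 -> b < 3 -> a != a' -> cols_disjoint (K a b) (K a' b)))
  (latin K).
Proof.
apply: (iffP andP) => [[/all_belowP Hr /all_belowP Hc]|[Hr Hc]]; split.
- move=> a b b' Ha Hb Hb'; move/all_belowP: (Hr a Ha) => /(_ b Hb) /all_belowP /(_ b' Hb').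
  by move/implyP.
- move=> a a' b Ha Ha' Hb; move/all_belowP: (Hc a Ha) => /(_ a' Ha') /all_belowP /(_ b Hb).
  by move/implyP.
- apply/all_belowP => a Ha; apply/all_belowP => b Hb; apply/all_belowP => b' Hb'.
  by apply/implyP; apply: Hr.
- apply/all_belowP => a Ha; apply/all_belowP => a' Ha'; apply/all_belowP => b Hb.
  by apply/implyP; apply: Hc.
Qed.

(* The generators of H_Gamma used below: [RowSwap a b] swaps two adjacent rows
   of band [a] (rows 0,1 if [b] is false, rows 1,2 otherwise), [BandSwap]
   swaps bands 2 and 3; columns and pillars likewise.  [letter_act l K] is
   the block matrix of the board moved by [l] when [K] is that of the
   original board (lemma [block_letter]). *)
Inductive letter :=
  | Transp | RowSwap of 'I_3 & bool | ColSwap of 'I_3 & bool | BandSwap | PillarSwap.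

Definition word := seq letter.

Definition letter_src (l : letter) (a b : nat) : nat * nat :=
  match l with
  | Transp => (b, a)
  | BandSwap => (adj_swap true a, b)
  | PillarSwap => (a, adj_swap true b)
  | _ => (a, b)
  end.

Definition letter_sq (l : letter) (a b : nat) : seq nat -> seq nat :=
  match l with
  | Transp => sq_transpose
  | RowSwap a0 s => if a == a0 then sq_swap_rows s else id
  | ColSwap b0 s => if b == b0 then sq_swap_cols s else id
  | _ => id
  end.

Definition letter_act (l : letter) (K : nat -> nat -> seq nat) (a b : nat) : seq nat :=
  letter_sq l a b (K (letter_src l a b).1 (letter_src l a b).2).

Definition word_act (w : word) (K : nat -> nat -> seq nat) : nat -> nat -> seq nat :=
  foldl (fun K l => letter_act l K) K w.

Lemma word_act_cat w1 w2 K : word_act (w1 ++ w2) K = word_act w2 (word_act w1 K).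
Proof. by rewrite /word_act foldl_cat. Qed.

Definition closed_under (l : letter) (P : nat -> nat -> bool) : Prop :=
  forall a b, P a b -> P (letter_src l a b).1 (letter_src l a b).2.

Lemma word_act_local (L : pred letter) (P : nat -> nat -> bool) (w : word)
    (K K' : nat -> nat -> seq nat) :
  all L w -> (forall l, L l -> closed_under l P) ->
  (forall a b, P a b -> K a b = K' a b) ->
  forall a b, P a b -> word_act w K a b = word_act w K' a b.
Proof.
move=> Lw HL; elim: w Lw K K' => [|l w IH] //= /andP [Ll Lw] K K' E.
by apply: IH => // a b Hab; rewrite /letter_act E //; apply: HL.
Qed.

Lemma word_act_fixed (L : pred letter) (w : word) a b :
  all L w -> (forall l K, L l -> letter_act l K a b = K a b) ->
  forall K, word_act w K a b = K a b.
Proof.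
move=> Lw HL; elim: w Lw => [|l w IH] //= /andP [Ll Lw] K.
by rewrite IH // HL.
Qed.

Definition in_grid (a b : nat) : bool := (a < 3) && (b < 3).

Lemma grid_closed l : closed_under l in_grid.
Proof.
move=> a b /andP [Ha Hb].
by case: l => [|? ?|? ?||]; rewrite /in_grid /= ?adj_swap_lt ?Ha ?Hb.
Qed.

Lemma latin_letter_act l K : latin K -> latin (letter_act l K).
Proof.
case/latinP=> Hr Hc; apply/latinP; rewrite /letter_act; case: l => [|a0 s|b0 s||] /=.
- split=> [a b b' Ha Hb Hb' Hbb|a a' b Ha Ha' Hb Haa].
    by apply: rows_disjoint_transpose; apply: Hc.
  by apply: cols_disjoint_transpose; apply: Hr.
- split=> [a b b' Ha Hb Hb' Hbb|a a' b Ha Ha' Hb Haa].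
    by case: ifP => _; [apply: rows_disjoint_swap_rows|]; apply: Hr.
  have H := Hc a a' b Ha Ha' Hb Haa.
  case: ifP => _; first apply: cols_disjoint_swap_rows;
    by case: ifP => _ //; rewrite cols_disjointC; apply: cols_disjoint_swap_rows;
       rewrite cols_disjointC.
- split=> [a b b' Ha Hb Hb' Hbb|a a' b Ha Ha' Hb Haa]; last first.
    by case: ifP => _; [apply: cols_disjoint_swap_cols|]; apply: Hc.
  have H := Hr a b b' Ha Hb Hb' Hbb.
  case: ifP => _; first apply: rows_disjoint_swap_cols;
    by case: ifP => _ //; rewrite rows_disjointC; apply: rows_disjoint_swap_cols;
       rewrite rows_disjointC.
- split=> [a b b' Ha Hb Hb' Hbb|a a' b Ha Ha' Hb Haa]; first by apply: Hr; rewrite ?adj_swap_lt.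
  apply: Hc; rewrite ?adj_swap_lt //.
  by apply: contra Haa => /eqP /(congr1 (adj_swap true)); rewrite !adj_swapK => ->.
- split=> [a b b' Ha Hb Hb' Hbb|a a' b Ha Ha' Hb Haa]; last by apply: Hc; rewrite ?adj_swap_lt.
  apply: Hr; rewrite ?adj_swap_lt //.
  by apply: contra Hbb => /eqP /(congr1 (adj_swap true)); rewrite !adj_swapK => ->.
Qed.

Definition magic_grid (K : nat -> nat -> seq nat) : Prop :=
  forall a b, in_grid a b -> K a b \in magic_squares.

Lemma magic_letter_act l K : magic_grid K -> magic_grid (letter_act l K).
Proof.
move=> HK a b Hab; have := HK _ _ (grid_closed l Hab); rewrite /letter_act.
case: l => [|a0 s|b0 s||] //= Hm; first exact: magic_transpose.
  by case: ifP => _ //; apply: magic_swap_rows.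
by case: ifP => _ //; apply: magic_swap_cols.
Qed.

Lemma latin_word_act w K : latin K -> latin (word_act w K).
Proof. by elim: w K => [|l w IH] K //= HK; apply: IH; apply: latin_letter_act. Qed.

Lemma magic_word_act w K : magic_grid K -> magic_grid (word_act w K).
Proof. by elim: w K => [|l w IH] K //= HK; apply: IH; apply: magic_letter_act. Qed.

Lemma fibers1_injective (T U : finType) (f : T -> U) : #|T| = #|U| ->
  (forall y, #|[set x | f x == y]| == 1) <-> injective f.
Proof.
move=> cardTU; split=> [fib x x' fx|injf y].
  have /cards1P [z Ez] := fib (f x).
  have : x \in [set z | f z == f x] by rewrite inE.
  have : x' \in [set z | f z == f x] by rewrite inE -fx.
  by rewrite Ez !inE => /eqP -> /eqP ->.
have /codomP [x ->] : y \in codom f by apply: (inj_card_onto injf); rewrite cardTU.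
by apply/cards1P; exists x; apply/setP => x'; rewrite !inE (inj_eq injf).
Qed.

Lemma ord9_split (x : 'I_9) : x = inord (3 * (x %/ 3) + x %% 3).
Proof. by have Hx := ltn_ord x; apply/val_inj; rewrite /= inordK; lia. Qed.

Lemma inord9_inj m n : (inord m : 'I_9) = inord n -> m < 9 -> n < 9 -> m = n.
Proof. by move=> /(congr1 val) /= + Hm Hn; rewrite !inordK. Qed.

Definition block (B : board) (a b : nat) : seq nat :=
  square_of (fun i j => nat_of_ord (B (inord (3 * a + i), inord (3 * b + j)))).

Lemma block_entry (B : board) a b i j : i < 3 -> j < 3 ->
  sq_entry (block B a b) i j = B (inord (3 * a + i), inord (3 * b + j)).
Proof. exact: sq_entry_square_of. Qed.

Lemma board_entry (B : board) (r c : 'I_9) :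
  B (r, c) = sq_entry (block B (r %/ 3) (c %/ 3)) (r %% 3) (c %% 3) :> nat.
Proof. by rewrite block_entry -?ord9_split //; lia. Qed.

Section FromSemimagic.
Variable B : board.
Hypothesis semimagic_B : semimagic B.

Let sudoku_B : sudoku B. Proof. by case/and3P: semimagic_B. Qed.

Lemma semimagic_row_inj (r : 'I_9) : injective (fun c => B (r, c)).
Proof.
case/and3P: sudoku_B => /forallP /(_ r) /forallP fib _ _.
by apply/(fibers1_injective (fun c => B (r, c))) => //; rewrite card_ord.
Qed.

Lemma semimagic_col_inj (c : 'I_9) : injective (fun r => B (r, c)).
Proof.
case/and3P: sudoku_B => _ /forallP /(_ c) /forallP fib _.
by apply/(fibers1_injective (fun r => B (r, c))) => //; rewrite card_ord.
Qed.

Lemma semimagic_block_inj (a b : 'I_3) :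
  injective (fun p : 'I_3 * 'I_3 => B (bcell a b p.1 p.2)).
Proof.
case/and3P: sudoku_B => _ _ /forallP /(_ a) /forallP /(_ b) /forallP fib.
by apply/(fibers1_injective (fun p : 'I_3 * 'I_3 => B (bcell a b p.1 p.2))) => //;
  rewrite card_prod !card_ord.
Qed.

Lemma semimagic_magic_grid : magic_grid (block B).
Proof.
move=> a b /andP [Ha Hb]; rewrite mem_magic_squares /magic_sq size_square_of eqxx andTb.
apply/and3P; split.
- rewrite /block; apply: uniq_square_of => i j i' j' Hi Hj Hi' Hj' /val_inj.
  move/(@semimagic_block_inj (Ordinal Ha) (Ordinal Hb)
          (Ordinal Hi, Ordinal Hj) (Ordinal Hi', Ordinal Hj')).
  by case.
- by apply/allP => x /mapP [n _ ->].
- apply/all_belowP => i Hi; rewrite !block_entry //.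
  case/and3P: semimagic_B => _ /forallP /(_ (Ordinal Ha)) /forallP /(_ (Ordinal Hb))
    /forallP /(_ (Ordinal Hi)) /eqP Hr /forallP /(_ (Ordinal Ha)) /forallP /(_ (Ordinal Hb))
    /forallP /(_ (Ordinal Hi)) /eqP Hc.
  by rewrite -{1}Hr -Hc !big_ord_recr !big_ord0 /= /bcell /= !add0n !eqxx.
Qed.

Lemma semimagic_latin : latin (block B).
Proof.
apply/latinP; split.
- move=> a b b' Ha Hb Hb' Hbb; apply/rows_disjointP => i j j' Hi Hj Hj'.
  rewrite !block_entry //; apply/negP => /eqP /val_inj /semimagic_row_inj /inord9_inj E.
  by move/eqP: Hbb; apply; lia.
- move=> a a' b Ha Ha' Hb Haa; apply/cols_disjointP => i i' j Hi Hi' Hj.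
  rewrite !block_entry //; apply/negP => /eqP /val_inj /semimagic_col_inj /inord9_inj E.
  by move/eqP: Haa; apply; lia.
Qed.
End FromSemimagic.

Section ToSemimagic.
Variable B : board.
Hypothesis magic_B : magic_grid (block B).
Hypothesis latin_B : latin (block B).

Let magic_at (r c : 'I_9) : block B (r %/ 3) (c %/ 3) \in magic_squares.
Proof. by apply: magic_B; apply/andP; split; rewrite ltn_divLR. Qed.

Lemma blocks_row_inj (r : 'I_9) : injective (fun c => B (r, c)).
Proof.
move=> c1 c2; have := ltn_ord r; have := ltn_ord c1; have := ltn_ord c2.
move=> lt_c2 lt_c1 lt_r /(congr1 val); rewrite /= !board_entry.
have [Eb|Nb] := eqVneq (c1 %/ 3) (c2 %/ 3).
  rewrite Eb => /(magic_entry_inj (magic_at r c2)) [] //; try lia.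
  by move=> _ Ej; apply: ord_inj; lia.
case/latinP: latin_B => /(_ (r %/ 3) _ _ _ _ _ Nb) /rows_disjointP Hr _.
by move/eqP; rewrite (negbTE (Hr _ _ _ _ _ _ _ _ _)) //; lia.
Qed.

Lemma blocks_col_inj (c : 'I_9) : injective (fun r => B (r, c)).
Proof.
move=> r1 r2; have := ltn_ord c; have := ltn_ord r1; have := ltn_ord r2.
move=> lt_r2 lt_r1 lt_c /(congr1 val); rewrite /= !board_entry.
have [Ea|Na] := eqVneq (r1 %/ 3) (r2 %/ 3).
  rewrite Ea => /(magic_entry_inj (magic_at r2 c)) [] //; try lia.
  by move=> Ei _; apply: ord_inj; lia.
case/latinP: latin_B => _ /(_ _ _ (c %/ 3) _ _ _ Na) /cols_disjointP Hc.
by move/eqP; rewrite (negbTE (Hc _ _ _ _ _ _ _ _ _)) //; lia.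
Qed.

Lemma blocks_block_inj (a b : 'I_3) :
  injective (fun p : 'I_3 * 'I_3 => B (bcell a b p.1 p.2)).
Proof.
have Hab : in_grid a b by rewrite /in_grid !ltn_ord.
move=> [i j] [i' j'] /(congr1 val); rewrite /= -!block_entry //.
by case/(magic_entry_inj (magic_B Hab)) => // /val_inj -> /val_inj ->.
Qed.

Lemma blocks_semimagic : semimagic B.
Proof.
apply/and3P; split; [apply/and3P; split| |].
- apply/forallP => r; apply/forallP; apply/fibers1_injective; last exact: blocks_row_inj.
  by rewrite card_ord.
- apply/forallP => c; apply/forallP; apply/fibers1_injective; last exact: blocks_col_inj.
  by rewrite card_ord.
- apply/forallP => a; apply/forallP => b; apply/forallP.
  by apply/fibers1_injective; [rewrite card_prod !card_ord | exact: blocks_block_inj].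
- apply/forallP => a; apply/forallP => b; apply/forallP => i.
  have Hab : in_grid a b by rewrite /in_grid !ltn_ord.
  rewrite !big_ord_recr big_ord0 /= /bcell /= add0n -!block_entry ?ltn_ord //.
  by rewrite magic_row_sum ?ltn_ord //; apply: magic_B.
- apply/forallP => a; apply/forallP => b; apply/forallP => j.
  have Hab : in_grid a b by rewrite /in_grid !ltn_ord.
  rewrite !big_ord_recr big_ord0 /= /bcell /= add0n -!block_entry ?ltn_ord //.
  by rewrite magic_col_sum ?ltn_ord //; apply: magic_B.
Qed.
End ToSemimagic.

(** * Letters as cell permutations *)

Definition band_tperm (a : 'I_3) (s : bool) : {perm 'I_9} :=
  tperm (inord (3 * a + (if s then 1 else 0))) (inord (3 * a + (if s then 2 else 1))).

Definition letter_perm (l : letter) : {perm cell} :=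
  match l with
  | Transp => transp
  | RowSwap a s => rowact (band_tperm a s)
  | ColSwap b s => colact (band_tperm b s)
  | BandSwap => rowact swap23
  | PillarSwap => colact swap23
  end.

Definition word_perm (w : word) : {perm cell} := (\prod_(l <- w) letter_perm l)%g.

Lemma letter_perm_in l : letter_perm l \in HGamma.
Proof.
apply: mem_gen; rewrite /HGamma_gens !inE.
case: l => [|a s|b s||] /=; rewrite ?eqxx ?orbT //.
- apply/orP; left; apply/orP; left; apply/orP; right; apply/imsetP.
  exists (inord (3 * a + (if s then 1 else 0)), inord (3 * a + (if s then 2 else 1))) => //.
  by rewrite inE /= !inordK; case: s; have := ltn_ord a; lia.
- apply/orP; left; apply/orP; right; apply/imsetP.
  exists (inord (3 * b + (if s then 1 else 0)), inord (3 * b + (if s then 2 else 1))) => //.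
  by rewrite inE /= !inordK; case: s; have := ltn_ord b; lia.
Qed.

Lemma word_perm_in w : word_perm w \in HGamma.
Proof. by apply: group_prod => l _; apply: letter_perm_in. Qed.

Lemma val_tperm n (x y z : 'I_n) :
  nat_of_ord (tperm x y z) =
    if z == x :> nat then nat_of_ord y else if z == y :> nat then nat_of_ord x else nat_of_ord z.
Proof.
rewrite !val_eqE.
case: tpermP => [->|->|Nx Ny]; rewrite ?eqxx //; first by case: eqP => [->|].
by do 2 case: eqP => // ?.
Qed.

Lemma band_tperm_ord (a0 : 'I_3) s a i : a < 3 -> i < 3 ->
  band_tperm a0 s (inord (3 * a + i)) = inord (3 * a + (if a == a0 then adj_swap s i else i)).
Proof.
move=> Ha Hi; have Ha0 := ltn_ord a0.
have Hj : (if a == a0 then adj_swap s i else i) < 3 by case: ifP => _ //; apply: adj_swap_lt.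
have Hs : ((if s then 1 else 0) < 3) && ((if s then 2 else 1) < 3) by case: (s).
apply/val_inj; rewrite /= val_tperm !inordK; try lia; clear Hj Hs.
by case: s; case: a Ha => [|[|[|]]] //; case: i Hi => [|[|[|]]] //;
  case: (nat_of_ord a0) Ha0 => [|[|[|]]].
Qed.

Lemma swap23_ord a i : a < 3 -> i < 3 ->
  swap23 (inord (3 * a + i)) = inord (3 * adj_swap true a + i).
Proof.
move=> Ha Hi; have Hs := adj_swap_lt true Ha.
apply/val_inj; rewrite /swap23 /= !permM !val_tperm !inordK; try lia; clear Hs.
by case: a Ha => [|[|[|]]] //; case: i Hi => [|[|[|]]].
Qed.

Lemma swap23K : involutive swap23.
Proof.
move=> x; have Hx := ltn_ord x.
by rewrite {1}(ord9_split x) !swap23_ord ?adj_swap_lt ?adj_swapK -?ord9_split //; lia.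
Qed.

Lemma letter_permK l : involutive (letter_perm l).
Proof.
by case: l => [|a s|b s||] [r c]; rewrite /= !permE /transp_fun /rowf /colf /= ?tpermK ?swap23K.
Qed.

Lemma bactE g B x : bact g B x = B ((g^-1)%g x).
Proof. by rewrite ffunE. Qed.

Lemma bact1 B : bact 1 B = B.
Proof. by apply/ffunP => x; rewrite !ffunE invg1 perm1. Qed.

Lemma bactM g h B : bact (g * h) B = bact h (bact g B).
Proof. by apply/ffunP => x; rewrite !ffunE invMg permM. Qed.

Lemma bact_letter l B x : bact (letter_perm l) B x = B (letter_perm l x).
Proof. by rewrite bactE -[in RHS](permKV (letter_perm l) x) letter_permK. Qed.

Lemma letter_act_block_entry l B a b i j : in_grid a b -> i < 3 -> j < 3 ->
  sq_entry (letter_act l (block B) a b) i j =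
    B (letter_perm l (inord (3 * a + i), inord (3 * b + j))).
Proof.
case/andP=> Ha Hb Hi Hj; rewrite /letter_act.
case: l => [|a0 s|b0 s||]; rewrite /= permE /transp_fun /rowf /colf /=.
- by rewrite sq_entry_square_of // block_entry.
- rewrite band_tperm_ord //; case: ifP => _; last exact: block_entry.
  by rewrite sq_entry_square_of // block_entry ?adj_swap_lt.
- rewrite band_tperm_ord //; case: ifP => _; last exact: block_entry.
  by rewrite sq_entry_square_of // block_entry ?adj_swap_lt.
- by rewrite swap23_ord // block_entry.
- by rewrite swap23_ord // block_entry.
Qed.

Lemma size_letter_act l B a b : size (letter_act l (block B) a b) = 9.
Proof.
by rewrite /letter_act; case: l => [|? ?|? ?||] /=; rewrite ?size_square_of //; case: ifP.
Qed.

Lemma block_letter l B a b : in_grid a b ->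
  block (bact (letter_perm l) B) a b = letter_act l (block B) a b.
Proof.
move=> Hab; rewrite -[RHS](square_of_nth 0) ?size_letter_act //.
apply: eq_square_of => i j Hi Hj.
by rewrite -/(sq_entry _ i j) letter_act_block_entry // bact_letter.
Qed.

Lemma block_word w B a b : in_grid a b ->
  block (bact (word_perm w) B) a b = word_act w (block B) a b.
Proof.
elim: w B a b => [|l w IH] B a b Hab; first by rewrite /word_perm big_nil bact1.
rewrite /word_perm big_cons bactM IH //=.
by apply: (word_act_local (L := predT) (P := in_grid)) => // [|l' _|a' b' Hab'];
  [exact: all_predT|apply: grid_closed|apply: block_letter].
Qed.

(** * Normalizing the gnomon *)

Definition std_block (a b : nat) : seq nat :=
  square_of (fun i j => std_entry (3 * a + i) (3 * b + j)).

(* The six permutations of {0, 1, 2} as words in adjacent transpositions. *)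
Definition perm3_words : seq (seq bool) :=
  [:: [::]; [:: false]; [:: true]; [:: false; true]; [:: true; false]; [:: false; true; false]].

Definition products (ws1 ws2 : seq word) : seq word := [seq w1 ++ w2 | w1 <- ws1, w2 <- ws2].

Definition band_words (a : 'I_3) : seq word := [seq map (RowSwap a) w | w <- perm3_words].
Definition pillar_words (b : 'I_3) : seq word := [seq map (ColSwap b) w | w <- perm3_words].

(* Explicit ordinals, as [inord] does not reduce under [vm_compute]. *)
Definition ord3_0 : 'I_3 := @Ordinal 3 0 isT.
Definition ord3_1 : 'I_3 := @Ordinal 3 1 isT.
Definition ord3_2 : 'I_3 := @Ordinal 3 2 isT.

Definition corner_words : seq word :=
  products [:: [::]; [:: Transp]] (products (band_words ord3_0) (pillar_words ord3_0)).
Definition top_words : seq word :=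
  products [:: [::]; [:: PillarSwap]] (products (pillar_words ord3_1) (pillar_words ord3_2)).
Definition left_words : seq word :=
  products [:: [::]; [:: BandSwap]] (products (band_words ord3_1) (band_words ord3_2)).

(* Returns the empty word when no word of [ws] works; the [_spec] lemmas
   below check that one always does on the relevant inputs. *)
Definition first_word (ws : seq word) (ok : (nat -> nat -> seq nat) -> bool)
    (K : nat -> nat -> seq nat) : word :=
  nth [::] ws (find (fun w => ok (word_act w K)) ws).

Definition std_at (cells : seq (nat * nat)) (K : nat -> nat -> seq nat) : bool :=
  all (fun p => K p.1 p.2 == std_block p.1 p.2) cells.

Definition gnomon_cells : seq (nat * nat) := [:: (0, 0); (0, 1); (0, 2); (1, 0); (2, 0)].

Definition corner_word (t : seq nat) : word :=
  first_word corner_words (std_at [:: (0, 0)]) (fun _ _ => t).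

Definition top_word (t01 t02 : seq nat) : word :=
  first_word top_words (std_at [:: (0, 1); (0, 2)]) (fun _ b => if b == 1 then t01 else t02).

Definition left_word (t10 t20 : seq nat) : word :=
  first_word left_words (std_at [:: (1, 0); (2, 0)]) (fun a _ => if a == 1 then t10 else t20).

Lemma corner_word_spec : all (fun t =>
  std_at [:: (0, 0)] (word_act (corner_word t) (fun _ _ => t))) magic_squares.
Proof. by vm_compute. Qed.

Lemma top_word_spec :
  all (fun t01 => all (fun t02 =>
    std_at [:: (0, 1); (0, 2)]
      (word_act (top_word t01 t02) (fun _ b => if b == 1 then t01 else t02)))
  [seq t02 <- magic_squares | rows_disjoint (std_block 0 0) t02 && rows_disjoint t01 t02])
  [seq t01 <- magic_squares | rows_disjoint (std_block 0 0) t01].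
Proof. by vm_compute. Qed.

Lemma left_word_spec :
  all (fun t10 => all (fun t20 =>
    std_at [:: (1, 0); (2, 0)]
      (word_act (left_word t10 t20) (fun a _ => if a == 1 then t10 else t20)))
  [seq t20 <- magic_squares | cols_disjoint (std_block 0 0) t20 && cols_disjoint t10 t20])
  [seq t10 <- magic_squares | cols_disjoint (std_block 0 0) t10].
Proof. by vm_compute. Qed.

(* Letters of [top_words] only move the blocks (0, 1), (0, 2) among the
   gnomon blocks and letters of [left_words] only (1, 0), (2, 0). *)
Definition top_letter (l : letter) : bool :=
  match l with ColSwap b _ => b != 0 :> nat | PillarSwap => true | _ => false end.
Definition left_letter (l : letter) : bool :=
  match l with RowSwap a _ => a != 0 :> nat | BandSwap => true | _ => false end.

Definition top_cell (a b : nat) : bool := (a == 0) && ((b == 1) || (b == 2)).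
Definition left_cell (a b : nat) : bool := (b == 0) && ((a == 1) || (a == 2)).

Lemma first_word_all (P : pred letter) ws ok K :
  all (all P) ws -> all P (first_word ws ok K).
Proof.
move=> /(all_nthP [::]) H; rewrite /first_word.
by case: (ltnP (find (fun w => ok (word_act w K)) ws) (size ws)) => [/H|/(nth_default [::]) ->].
Qed.

Lemma top_letter_closed l : top_letter l -> closed_under l top_cell.
Proof. by case: l => [|? ?|b s||] //= _ a b' /andP [/eqP -> /orP [] /eqP ->]. Qed.

Lemma left_letter_closed l : left_letter l -> closed_under l left_cell.
Proof. by case: l => [|a s|? ?||] //= _ a' b /andP [/eqP -> /orP [] /eqP ->]. Qed.

Lemma top_letter_fixes l K a : top_letter l -> letter_act l K a 0 = K a 0.
Proof. by case: l => [|? ?|b s||] //= /negPf; rewrite /letter_act /= eq_sym => ->. Qed.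

Lemma left_letter_fixes l K b : left_letter l -> letter_act l K 0 b = K 0 b.
Proof. by case: l => [|a s|? ?||] //= /negPf; rewrite /letter_act /= eq_sym => ->. Qed.

Lemma corner_normalization K : magic_grid K ->
  word_act (corner_word (K 0 0)) K 0 0 = std_block 0 0.
Proof.
move=> HK; have := allP corner_word_spec _ (HK 0 0 isT).
rewrite /std_at /= andbT => /eqP <-.
apply: (word_act_local (L := predT) (P := fun a b => (a == 0) && (b == 0))) => //.
- exact: all_predT.
- by move=> l _ a b /andP [/eqP -> /eqP ->]; case: l => //=.
- by move=> a b /andP [/eqP -> /eqP ->].
Qed.

Lemma top_normalization K : latin K -> magic_grid K -> K 0 0 = std_block 0 0 ->
  let K' := word_act (top_word (K 0 1) (K 0 2)) K in
  [/\ K' 0 1 = std_block 0 1, K' 0 2 = std_block 0 2 & forall a, K' a 0 = K a 0].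
Proof.
move=> /latinP [Hr _] HK E00 K'.
have top_w : all top_letter (top_word (K 0 1) (K 0 2)) by apply: first_word_all.
have : std_at [:: (0, 1); (0, 2)] (word_act (top_word (K 0 1) (K 0 2))
                                    (fun _ b => if b == 1 then K 0 1 else K 0 2)).
  by apply: (allP (allP top_word_spec (K 0 1) _) (K 0 2)); rewrite mem_filter -E00 !Hr ?HK.
have agree b : top_cell 0 b -> K' 0 b =
    word_act (top_word (K 0 1) (K 0 2)) (fun _ b => if b == 1 then K 0 1 else K 0 2) 0 b.
  apply: (word_act_local top_w top_letter_closed) => a b' /andP [/eqP -> /orP [] /eqP ->] //.
rewrite /std_at /= andbT -!agree // => /andP [/eqP -> /eqP ->]; split=> // a.
by rewrite /K'; apply: (word_act_fixed top_w) => l K'' Hl; apply: top_letter_fixes.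
Qed.

Lemma left_normalization K : latin K -> magic_grid K -> K 0 0 = std_block 0 0 ->
  let K' := word_act (left_word (K 1 0) (K 2 0)) K in
  [/\ K' 1 0 = std_block 1 0, K' 2 0 = std_block 2 0 & forall b, K' 0 b = K 0 b].
Proof.
move=> /latinP [_ Hc] HK E00 K'.
have left_w : all left_letter (left_word (K 1 0) (K 2 0)) by apply: first_word_all.
have : std_at [:: (1, 0); (2, 0)] (word_act (left_word (K 1 0) (K 2 0))
                                    (fun a _ => if a == 1 then K 1 0 else K 2 0)).
  by apply: (allP (allP left_word_spec (K 1 0) _) (K 2 0)); rewrite mem_filter -E00 !Hc ?HK.
have agree a : left_cell a 0 -> K' a 0 =
    word_act (left_word (K 1 0) (K 2 0)) (fun a _ => if a == 1 then K 1 0 else K 2 0) a 0.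
  apply: (word_act_local left_w left_letter_closed) => a' b /andP [/eqP -> /orP [] /eqP ->] //.
rewrite /std_at /= andbT -!agree // => /andP [/eqP -> /eqP ->]; split=> // b.
by rewrite /K'; apply: (word_act_fixed left_w) => l K'' Hl; apply: left_letter_fixes.
Qed.

Lemma gnomon_normalization K : latin K -> magic_grid K ->
  exists w, std_at gnomon_cells (word_act w K).
Proof.
move=> LK MK; set w1 := corner_word (K 0 0); set K1 := word_act w1 K.
have L1 : latin K1 by apply: latin_word_act.
have M1 : magic_grid K1 by apply: magic_word_act.
have corner : K1 0 0 = std_block 0 0 by apply: corner_normalization.
have [top1 top2 col0] := top_normalization L1 M1 corner.
set w2 := top_word (K1 0 1) (K1 0 2); set K2 := word_act w2 K1.
have [left1 left2 row0] :=
  left_normalization (latin_word_act w2 L1) (magic_word_act w2 M1) (etrans (col0 0) corner).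
exists (w1 ++ w2 ++ left_word (K2 1 0) (K2 2 0)).
by rewrite /std_at /= !word_act_cat left1 left2 !row0 top1 top2 col0 corner !eqxx.
Qed.

Lemma std_atP cells K :
  reflect (forall a b, (a, b) \in cells -> K a b = std_block a b) (std_at cells K).
Proof. by apply: (iffP allP) => [H a b /H /eqP|H [a b] /H /eqP]. Qed.

Lemma mem_gnomon_cells a b :
  ((a, b) \in gnomon_cells) = [&& a < 3, b < 3 & (a == 0) || (b == 0)].
Proof. by case: a => [|[|[|a]]]; case: b => [|[|[|b]]]. Qed.

Lemma std_gnomon_blocks B : std_gnomon B <-> std_at gnomon_cells (block B).
Proof.
split=> [S|/std_atP S].
  apply/std_atP => a b; rewrite mem_gnomon_cells => /and3P [Ha Hb Hab].
  apply: eq_square_of => i j Hi Hj.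
  have Hai : 3 * a + i < 9 by lia.
  have Hbj : 3 * b + j < 9 by lia.
  have /forallP /(_ (inord (3 * b + j))) := forallP S (inord (3 * a + i)).
  rewrite !inordK // => /implyP H; apply/eqP; apply: H; lia.
apply/forallP => r; apply/forallP => c; apply/implyP => Hrc.
have Hr := ltn_ord r; have Hc := ltn_ord c.
rewrite board_entry S ?mem_gnomon_cells; last by apply/and3P; split; lia.
have Er : 3 * (r %/ 3) + r %% 3 = r by lia.
have Ec : 3 * (c %/ 3) + c %% 3 = c by lia.
by rewrite sq_entry_square_of ?Er ?Ec ?ltn_mod.
Qed.

Section GridEq.
Variables K K' : nat -> nat -> seq nat.
Hypothesis eqKK' : forall a b, in_grid a b -> K a b = K' a b.

Lemma latin_grid_eq : latin K -> latin K'.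
Proof.
case/latinP=> Hr Hc; apply/latinP; split=> [a b b' Ha Hb Hb'|a a' b Ha Ha' Hb].
  by rewrite -!eqKK' /in_grid ?Ha ?Hb ?Hb' //; apply: Hr.
by rewrite -!eqKK' /in_grid ?Ha ?Ha' ?Hb //; apply: Hc.
Qed.

Lemma magic_grid_eq : magic_grid K -> magic_grid K'.
Proof. by move=> HK a b Hab; rewrite -eqKK' //; apply: HK. Qed.

Lemma std_at_grid_eq : std_at gnomon_cells K -> std_at gnomon_cells K'.
Proof.
move/std_atP => HK; apply/std_atP => a b Hab; rewrite -eqKK' ?HK //.
by move: Hab; rewrite mem_gnomon_cells => /and3P [Ha Hb _]; apply/andP.
Qed.
End GridEq.

Lemma normalize_board B : semimagic B ->
  exists w, semimagic (bact (word_perm w) B) && std_gnomon (bact (word_perm w) B).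
Proof.
move=> HB; have [w Hw] := gnomon_normalization (semimagic_latin HB) (semimagic_magic_grid HB).
have E a b : in_grid a b -> word_act w (block B) a b = block (bact (word_perm w) B) a b.
  by move=> Hab; rewrite block_word.
exists w; apply/andP; split; last by apply/std_gnomon_blocks; apply: std_at_grid_eq Hw.
apply: blocks_semimagic.
  by apply: magic_grid_eq E _; apply: magic_word_act; apply: semimagic_magic_grid.
by apply: latin_grid_eq E _; apply: latin_word_act; apply: semimagic_latin.
Qed.

(** * Boards with the standard gnomon *)

Definition board_of (K : nat -> nat -> seq nat) : board :=
  [ffun x : cell => inord (sq_entry (K (x.1 %/ 3) (x.2 %/ 3)) (x.1 %% 3) (x.2 %% 3))].

Lemma block_board_of K a b : magic_grid K -> in_grid a b -> block (board_of K) a b = K a b.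
Proof.
move=> HK /[dup] Hab /andP [Ha Hb].
rewrite -[RHS](square_of_nth 0) ?size_magic ?HK //; apply: eq_square_of => i j Hi Hj.
have Hai : 3 * a + i < 9 by lia.
have Hbj : 3 * b + j < 9 by lia.
have [Ea Ei] : (3 * a + i) %/ 3 = a /\ (3 * a + i) %% 3 = i by lia.
have [Eb Ej] : (3 * b + j) %/ 3 = b /\ (3 * b + j) %% 3 = j by lia.
by rewrite ffunE /= (inordK Hai) (inordK Hbj) Ea Eb Ei Ej inordK // magic_entry_lt9 ?HK.
Qed.

Lemma board_of_block B : board_of (block B) = B.
Proof. by apply/ffunP => -[r c]; apply/val_inj; rewrite ffunE /= inordK -board_entry. Qed.

Lemma board_of_grid_eq K K' : (forall a b, in_grid a b -> K a b = K' a b) ->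
  board_of K = board_of K'.
Proof.
move=> E; apply/ffunP => -[r c]; rewrite !ffunE /= E //.
by apply/andP; split; rewrite ltn_divLR.
Qed.

Definition matrix_of (ts : seq (seq nat)) (a b : nat) : seq nat := nth [::] ts (3 * a + b).

Definition std_completions : seq (seq (seq nat)) :=
  let s := std_block in
  [seq [:: s 0 0; s 0 1; s 0 2; s 1 0; p.1; p.2; s 2 0; q.1; q.2]
  | p <- [seq (t11, t12)
         | t11 <- [seq t <- magic_squares | rows_disjoint (s 1 0) t && cols_disjoint (s 0 1) t],
           t12 <- [seq t <- magic_squares |
                   [&& rows_disjoint (s 1 0) t, rows_disjoint t11 t & cols_disjoint (s 0 2) t]]],
    q <- [seq (t21, t22)
         | t21 <- [seq t <- magic_squares |
                   [&& rows_disjoint (s 2 0) t, cols_disjoint (s 0 1) t & cols_disjoint p.1 t]],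
           t22 <- [seq t <- magic_squares |
                   [&& rows_disjoint (s 2 0) t, rows_disjoint t21 t,
                       cols_disjoint (s 0 2) t & cols_disjoint p.2 t]]]].

Lemma std_completions_valid : all (fun ts =>
    [&& size ts == 9, all (fun t => t \in magic_squares) ts,
        latin (matrix_of ts) & std_at gnomon_cells (matrix_of ts)]) std_completions.
Proof. by vm_compute. Qed.

Lemma size_std_completions : size std_completions = 16.
Proof. by vm_compute. Qed.

Lemma uniq_std_completions : uniq std_completions.
Proof. by vm_compute. Qed.

Lemma std_completion_mem K : latin K -> magic_grid K -> std_at gnomon_cells K ->
  square_of K \in std_completions.
Proof.
case/latinP=> Hr Hc HK /std_atP S.
have E0 b : b < 3 -> std_block 0 b = K 0 b by move=> Hb; rewrite S ?mem_gnomon_cells ?Hb.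
have E1 a : a < 3 -> std_block a 0 = K a 0 by move=> Ha; rewrite S ?mem_gnomon_cells ?Ha ?orbT.
rewrite square_ofE -!E0 // -!E1 //.
apply/allpairsPdep; exists (K 1 1, K 1 2), (K 2 1, K 2 2); split=> //.
  apply/allpairsPdep; exists (K 1 1), (K 1 2).
  by rewrite !mem_filter !E0 ?E1 // !Hr ?Hc ?HK.
apply/allpairsPdep; exists (K 2 1), (K 2 2).
by rewrite !mem_filter !E0 ?E1 // !Hr ?Hc ?HK.
Qed.

Definition std_boards : seq board := [seq board_of (matrix_of ts) | ts <- std_completions].

Section StdCompletion.
Variable ts : seq (seq nat).
Hypothesis ts_std : ts \in std_completions.

Let ts_valid := allP std_completions_valid ts ts_std.

Lemma size_std_completion : size ts = 9.
Proof. by case/and4P: ts_valid => /eqP. Qed.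

Lemma std_completion_magic : magic_grid (matrix_of ts).
Proof.
case/and4P: ts_valid => _ /allP Hm _ _ a b /andP [Ha Hb].
by apply: Hm; rewrite mem_nth // size_std_completion; lia.
Qed.

Lemma block_std_board a b : in_grid a b ->
  block (board_of (matrix_of ts)) a b = matrix_of ts a b.
Proof. by apply: block_board_of; apply: std_completion_magic. Qed.

Lemma std_board_good : semimagic (board_of (matrix_of ts)) && std_gnomon (board_of (matrix_of ts)).
Proof.
case/and4P: ts_valid => _ _ Hl Hs.
have E a b : in_grid a b -> matrix_of ts a b = block (board_of (matrix_of ts)) a b.
  by move=> Hab; rewrite block_std_board.
apply/andP; split; last by apply/std_gnomon_blocks; apply: std_at_grid_eq E Hs.
apply: blocks_semimagic; last exact: latin_grid_eq E Hl.
exact: magic_grid_eq E std_completion_magic.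
Qed.
End StdCompletion.

Lemma std_boardsP C : (semimagic C && std_gnomon C) = (C \in std_boards).
Proof.
rewrite /std_boards; apply/idP/idP => [/andP [HC /std_gnomon_blocks SC]|/mapP [ts Hts ->]];
  last exact: std_board_good.
apply/mapP; exists (square_of (block C)).
  exact: std_completion_mem (semimagic_latin HC) (semimagic_magic_grid HC) SC.
rewrite -{1}(board_of_block C); apply: board_of_grid_eq => a b /andP [Ha Hb].
by rewrite /matrix_of nth_square_of.
Qed.

Lemma uniq_std_boards : uniq std_boards.
Proof.
rewrite /std_boards map_inj_in_uniq ?uniq_std_completions // => ts ts' Hts Hts' E.
rewrite -(square_of_nth [::] (size_std_completion Hts)).
rewrite -(square_of_nth [::] (size_std_completion Hts')).
apply: eq_square_of => a b Ha Hb.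
have Hab : in_grid a b by apply/andP.
by rewrite -!/(matrix_of _ a b) -(block_std_board Hts) // -(block_std_board Hts') // E.
Qed.

Lemma card_std_boards : #|[set C | semimagic C && std_gnomon C]| = 16.
Proof.
rewrite cardE (perm_size (uniq_perm (enum_uniq _) uniq_std_boards _)).
  by rewrite size_map size_std_completions.
by move=> C; rewrite mem_enum in_set std_boardsP.
Qed.

(** * Rigidity of the standard gnomon *)

Definition keeps_band1 (f : 'I_9 -> 'I_9) : Prop := forall x : 'I_9, x < 3 -> f x < 3.

Definition gnomon_shaped (g : {perm cell}) : Prop :=
  exists (tr : bool) (f h : 'I_9 -> 'I_9), [/\ keeps_band1 f, keeps_band1 h &
    forall x : cell, g x = if tr then (f x.2, h x.1) else (f x.1, h x.2)].

Lemma tperm_keeps_band1 (x y : 'I_9) : x %/ 3 = y %/ 3 -> keeps_band1 (tperm x y).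
Proof. by move=> Exy z; case: tpermP => [->|->|_ _] //; lia. Qed.

Lemma swap23_keeps_band1 : keeps_band1 swap23.
Proof.
move=> x Hx; have Hx9 := ltn_ord x; have E : x %/ 3 = 0 by lia.
by rewrite (ord9_split x) E swap23_ord ?ltn_mod // (_ : adj_swap true 0 = 0) // inordK; lia.
Qed.

Lemma gnomon_shaped_gen g s : gnomon_shaped g -> s \in HGamma_gens -> gnomon_shaped (g * s).
Proof.
case=> tr [f [h [Hf Hh Hg]]].
have row (t : {perm 'I_9}) : keeps_band1 t -> gnomon_shaped (g * rowact t).
  move=> Ht; exists tr, (t \o f), h; split=> // [x /Hf /Ht //|x].
  by rewrite permM Hg permE /rowf; case: (tr).
have col (t : {perm 'I_9}) : keeps_band1 t -> gnomon_shaped (g * colact t).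
  move=> Ht; exists tr, f, (t \o h); split=> // [x /Hh /Ht //|x].
  by rewrite permM Hg permE /colf; case: (tr).
rewrite /HGamma_gens; case/setUP => [/setUP [/setUP [|]|]|].
- rewrite inE => /eqP ->; exists (~~ tr), h, f; split=> // x.
  by rewrite permM Hg permE /transp_fun; case: (tr).
- by case/imsetP => p; rewrite inE => /eqP Hp ->; apply: row; apply: tperm_keeps_band1.
- by case/imsetP => p; rewrite inE => /eqP Hp ->; apply: col; apply: tperm_keeps_band1.
- by rewrite !inE => /orP [] /eqP ->; [apply: col | apply: row]; apply: swap23_keeps_band1.
Qed.

Lemma gnomon_shaped_HGamma g : g \in HGamma -> gnomon_shaped g.
Proof.
move/gen_prodgP => [n [c Hc ->]]; elim: n c Hc => [|n IH] c Hc.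
  by rewrite big_ord0; exists false, id, id; split=> // -[r c']; rewrite perm1.
by rewrite big_ord_recr /=; apply: gnomon_shaped_gen; [apply: IH|].
Qed.

Lemma std_gnomon_entry C (r c : 'I_9) : std_gnomon C -> (r < 3) || (c < 3) ->
  C (r, c) = std_entry r c :> nat.
Proof. by move=> /forallP /(_ r) /forallP /(_ c) /implyP H /H /eqP. Qed.

Lemma std_corner_inj i j i' j' : i < 3 -> j < 3 -> i' < 3 -> j' < 3 ->
  std_entry i j = std_entry i' j' -> i = i' /\ j = j'.
Proof.
have magic00 : std_block 0 0 \in magic_squares by vm_compute.
move=> Hi Hj Hi' Hj' E; apply: (magic_entry_inj magic00) => //.
by rewrite !sq_entry_square_of.
Qed.

Lemma uniq_map_iota_inj (F : nat -> nat) n i j :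
  uniq [seq F k | k <- iota 0 n] -> i < n -> j < n -> F i = F j -> i = j.
Proof.
move=> U Hi Hj E; apply/eqP; rewrite -(nth_uniq 0 _ _ U) ?size_map ?size_iota //.
by rewrite !(nth_map 0) ?size_iota // !nth_iota // E.
Qed.

Lemma std_col0_inj r r' : r < 9 -> r' < 9 -> std_entry r 0 = std_entry r' 0 -> r = r'.
Proof.
by move=> Hr Hr'; apply: (uniq_map_iota_inj (F := fun k => std_entry k 0) _ Hr Hr'); vm_compute.
Qed.

Lemma std_row0_inj c c' : c < 9 -> c' < 9 -> std_entry 0 c = std_entry 0 c' -> c = c'.
Proof. by move=> Hc Hc'; apply: (uniq_map_iota_inj (F := std_entry 0) _ Hc Hc'); vm_compute. Qed.

Lemma std_corner_row_not_column x0 x1 y : x0 < 3 -> x1 < 3 -> y < 3 ->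
  std_entry 0 0 = std_entry x0 y -> std_entry 0 1 = std_entry x1 y -> False.
Proof.
have split : all_below 3 (fun y => all_below 3 (fun x0 => all_below 3 (fun x1 =>
  (std_entry 0 0 != std_entry x0 y) || (std_entry 0 1 != std_entry x1 y)))) by vm_compute.
move=> Hx0 Hx1 Hy E0 E1.
move/all_belowP: split => /(_ y Hy) /all_belowP /(_ x0 Hx0) /all_belowP /(_ x1 Hx1).
by rewrite E0 E1 !eqxx.
Qed.

Lemma std_gnomon_rigid C1 C2 g : g \in HGamma ->
  std_gnomon C1 -> std_gnomon C2 -> C2 = bact g C1 -> C1 = C2.
Proof.
move=> Hg S1 S2 E; have [tr [f [h [Hf Hh Hgi]]]] := gnomon_shaped_HGamma (groupVr Hg).
have V x : C2 x = C1 (if tr then (f x.2, h x.1) else (f x.1, h x.2)) by rewrite E bactE Hgi.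
pose o (k : nat) (Hk : k < 9) := Ordinal Hk.
have o0 : (o 0 isT : 'I_9) < 3 by [].
clear Hgi; case: tr V => V.
  (* transposed: the first row of the gnomon would sit in one column of the first block *)
  exfalso; apply: (std_corner_row_not_column (x0 := f (o 0 isT)) (x1 := f (o 1 isT))
                                            (y := h (o 0 isT))); rewrite ?Hf ?Hh //.
    by rewrite -(std_gnomon_entry S1) ?Hf // -(V (o 0 isT, o 0 isT)) (std_gnomon_entry S2).
  by rewrite -(std_gnomon_entry S1) ?Hf // -(V (o 0 isT, o 1 isT)) (std_gnomon_entry S2).
have corner (r c : 'I_9) : r < 3 -> c < 3 -> f r = r :> nat /\ h c = c :> nat.
  move=> Hr Hc; apply: std_corner_inj; rewrite ?Hf ?Hh //.
  by rewrite -(std_gnomon_entry S1) ?Hf // -(V (r, c)) (std_gnomon_entry S2) ?Hr.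
have [f0 h0] := corner _ _ o0 o0.
have fid r : f r = r.
  apply/val_inj/std_col0_inj; rewrite ?ltn_ord //.
  have := std_gnomon_entry (r := r) (c := o 0 isT) S2.
  by rewrite V /= (std_gnomon_entry S1) ?h0 ?orbT // => ->.
have hid c : h c = c.
  apply/val_inj/std_row0_inj; rewrite ?ltn_ord //.
  have := std_gnomon_entry (r := o 0 isT) (c := c) S2.
  by rewrite V /= (std_gnomon_entry S1) ?f0 // => ->.
by apply/ffunP => -[r c]; rewrite V /= fid hid.
Qed.

Lemma normalize_in_HGamma B : semimagic B ->
  exists2 g, g \in HGamma & semimagic (bact g B) && std_gnomon (bact g B).
Proof.
by case/normalize_board => w Hw; exists (word_perm w) => //; apply: word_perm_in.
Qed.

Lemma nest_self B : B \in nest B.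
Proof. by apply/imsetP; exists 1%g; rewrite ?group1 ?bact1. Qed.

Lemma nest_bact g B : g \in HGamma -> nest (bact g B) = nest B.
Proof.
move=> Hg; apply/setP => C; apply/imsetP/imsetP => -[h Hh ->].
  by exists (g * h)%g; rewrite ?groupM ?bactM.
by exists (g^-1 * h)%g; rewrite ?groupM ?groupV // -bactM mulKVg.
Qed.

Lemma nest_std_eq B C C' : C \in nest B -> C' \in nest B ->
  std_gnomon C -> std_gnomon C' -> C = C'.
Proof.
case/imsetP => g Hg -> /imsetP [h Hh ->] S S'.
apply: (std_gnomon_rigid (g := (g^-1 * h)%g)) => //; first by rewrite groupM ?groupV.
by rewrite -bactM mulKVg.
Qed.

Lemma card_nests : #|[set nest B | B in semimagic_boards]| = 16.
Proof.
have -> : [set nest B | B in semimagic_boards] =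
          [set nest C | C in [set C | semimagic C && std_gnomon C]].
  apply/setP => N; apply/imsetP/imsetP => -[B HB ->]; rewrite !inE in HB.
    have [g Hg HgB] := normalize_in_HGamma HB.
    by exists (bact g B); rewrite ?inE ?nest_bact.
  by exists B; rewrite ?inE //; case/andP: HB.
rewrite card_in_imset ?card_std_boards // => C C'; rewrite !inE => /andP [_ S] /andP [_ S'] E.
by apply: (nest_std_eq (B := C)) => //; [apply: nest_self | rewrite E; apply: nest_self].
Qed.

Lemma card_std_in_nest B : semimagic B ->
  #|[set C in nest B | semimagic C && std_gnomon C]| = 1.
Proof.
case/normalize_in_HGamma => g Hg /andP [Hs Hst].
have HgB : bact g B \in nest B by apply/imsetP; exists g.
apply/eqP/cards1P; exists (bact g B); apply/setP => C; rewrite !inE.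
apply/idP/eqP => [/andP [HC /andP [_ SC]]|->]; last by rewrite HgB Hs Hst.
exact: nest_std_eq HC HgB SC Hst.
Qed.

Theorem theorem3p2 :
  (forall B : board, semimagic B ->
     exists2 g, g \in HGamma & semimagic (bact g B) && std_gnomon (bact g B))
  /\ #|[set nest B | B in semimagic_boards]| = 16
  /\ (forall B : board, semimagic B ->
        #|[set C in nest B | semimagic C && std_gnomon C]| = 1).
Proof.
split; first exact: normalize_in_HGamma.
by split; [exact: card_nests | exact: card_std_in_nest].
Qed.
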